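(* Let $n\in\mathbb N$ and let $(M,d)$ be a pointed metric space with $d(x,y)\in\{0,1,\dots,n\}$ for all $x,y\in M$. Let $\mu\in ba(\widetilde M)$ be positive. The following are equivalent: (i) $\|\Phi^*\mu\|=\|\mu\|$. (ii) For every $\gamma\in(0,1)$ there exist $B\subseteq\widetilde M$ and $f\in B_{\mathrm{Lip}_0(M)}$ with $\mu(B)\ge\gamma\mu(\widetilde M)$ and $f(m_{x,y})=1$ for all $(x,y)\in B$. (iii) For every $\gamma\in(0,1)$ there exists a cyclically monotonic $B\subseteq\widetilde M$ with $\mu(B)\ge\gamma\mu(\widetilde M)$.
   Context: $M$ has base point $0$; $\mathrm{Lip}_0(M)$ is the real Banach space of Lipschitz $f\colon M\to\mathbb R$ with $f(0)=0$, normed by the best Lipschitz constant, with unit ball $B_{\mathrm{Lip}_0(M)}$. $\widetilde M=\{(x,y)\in M\times M:x\ne y\}$ and $f(m_{x,y})=(f(x)-f(y))/d(x,y)$. $ba(\widetilde M)$ is the Banach space of bounded finitely additive signed measures on the power set of $\widetilde M$ with norm $|\mu|(\widetilde M)$. $\Phi f(x,y)=(f(x)-f(y))/d(x,y)$ (de Leeuw map into $\ell_\infty(\widetilde M)$) and $(\Phi^*\mu)(f)=\int_{\widetilde M}\Phi f\,d\mu$. $B\subseteq\widetilde M$ is cyclically monotonic if for every finite sequence $(x_1,y_1),\dots,(x_k,y_k)\in B$, with $y_{k+1}=y_1$, $\sum_{i=1}^k d(x_i,y_{i+1})\ge\sum_{i=1}^k d(x_i,y_i)$. *)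

From HB Require Import structures.
From mathcomp Require Import all_boot all_order all_algebra.
From mathcomp Require Import boolp classical_sets reals.
Set Implicit Arguments. Unset Strict Implicit. Unset Printing Implicit Defensive.
Import Order.TTheory GRing.Theory Num.Theory.
Local Open Scope classical_set_scope.
Local Open Scope ring_scope.

Section Defs.
Variable R : realType.

Definition is_metric (T : Type) (d : T -> T -> R) : Prop :=
  (forall x y, d x y = 0 <-> x = y) /\
  (forall x y, d x y = d y x) /\
  (forall x y z, d x z <= d x y + d y z).

Definition int_valued_le (T : Type) (d : T -> T -> R) (n : nat) : Prop :=
  forall x y, exists k : nat, (k <= n)%N /\ d x y = k%:R.

Definition in_Lip0_ball (T : Type) (d : T -> T -> R) (x0 : T) (f : T -> R) : Prop :=
  f x0 = 0 /\ forall x y, `|f x - f y| <= d x y.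

Definition Mt (T : Type) := {p : T * T | p.1 <> p.2}.

Definition Phi (T : Type) (d : T -> T -> R) (f : T -> R) (p : Mt T) : R :=
  (f (sval p).1 - f (sval p).2) / d (sval p).1 (sval p).2.

Definition fin_partition (U : Type) (s : seq (set U)) : Prop :=
  (forall i j, (i < j)%N -> (j < size s)%N -> nth set0 s i `&` nth set0 s j = set0) /\
  (forall x, exists2 i, (i < size s)%N & nth set0 s i x).

Definition is_ba (U : Type) (mu : set U -> R) : Prop :=
  (forall A B, A `&` B = set0 -> mu (A `|` B) = mu A + mu B) /\
  (exists C, forall A, `|mu A| <= C).

Definition ba_positive (U : Type) (mu : set U -> R) : Prop := forall A, 0 <= mu A.

Definition ba_norm (U : Type) (mu : set U -> R) : R :=
  sup [set r | exists s, fin_partition s /\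
                 r = \sum_(i < size s) `|mu (nth set0 s i)|].

(* integral of a bounded function against a positive finitely additive measure
   on the power set (supremum of lower sums over finite partitions) *)
Definition ba_integral (U : Type) (mu : set U -> R) (g : U -> R) : R :=
  sup [set r | exists s, fin_partition s /\
                 r = \sum_(i < size s) inf (g @` (nth set0 s i)) * mu (nth set0 s i)].

Definition Phi_star_norm (T : Type) (d : T -> T -> R) (x0 : T)
  (mu : set (Mt T) -> R) : R :=
  sup [set r | exists f, in_Lip0_ball d x0 f /\ r = `|ba_integral mu (Phi d f)|].

Definition cyclically_monotonic (T : Type) (d : T -> T -> R) (B : set (Mt T)) : Prop :=
  forall (k : nat) (p : 'I_k -> Mt T), (forall i, B (p i)) ->
    \sum_(i < k) d (sval (p i)).1 (sval (p (ordS i))).2 >=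
    \sum_(i < k) d (sval (p i)).1 (sval (p i)).2.

End Defs.

(* (ii) => (iii): if f(m_{x,y}) = 1 on B, then d(x,y) = f(x) - f(y) on B, and a cyclic sum
   sum_i d(x_i, y_(i+1)) dominates the telescoping sum sum_i (f(x_i) - f(y_(i+1))), which
   equals sum_i d(x_i, y_i).

   (iii) => (i): a cyclically monotonic B carries Rockafellar's potential: f(z) is the
   infimum over chains (x_0,y_0), ..., (x_k,y_k) in B of
   d(z,y_0) - d(x_0,y_0) + d(x_0,y_1) - ... - d(x_k,y_k) + d(x_k,0).
   It lies in the unit ball of Lip_0(M) and f(m_{x,y}) = 1 on B, so that
   <Phi^* mu, f> >= mu(B) - mu(~B) >= (2 gamma - 1) ||mu||.

   (i) => (ii): by Markov's inequality a norming f (or -f) has f(m_{x,y}) >= 1 - eta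
   outside a set of small measure. Since distances are integers at most n, the defect
   d(x,y) - (f(x) - f(y)) is there below 1/N. Rounding f + j/N down to integers gives
   1-Lipschitz functions g_j, and g_j(m_{x,y}) = 1 unless the fractional part of
   f(y) + j/N is below 1/N, which happens for at most one j < N. By pigeonhole some g_j
   has slope 1 on all of that set except a part of measure at most mu(M~)/N. *)

From HB Require Import structures.
From mathcomp Require Import all_boot all_order all_algebra.
From mathcomp Require Import boolp classical_sets reals.
From mathcomp Require Import ring lra zify.
Import Order.TTheory GRing.Theory Num.Theory.
Local Open Scope classical_set_scope.
Local Open Scope ring_scope.
Set Implicit Arguments. Unset Strict Implicit. Unset Printing Implicit Defensive.

Lemma ler_of_forall_mul_lt1 (R : realFieldType) (a b : R) : 0 <= a ->
  (forall g, 0 < g < 1 -> g * a <= b) -> a <= b.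
Proof.
move=> a_ge0 ab; rewrite leNgt; apply/negP => b_lt_a.
have : 2^-1 * a <= b by apply: ab; apply/andP; split; lra.
move=> half_le_b; have a_gt0 : 0 < a by lra.
have : (a + b) / (2 * a) * a <= b.
  apply: ab; rewrite divr_gt0 ?ltr_pdivrMr ?mulr_gt0 //=; lra.
have -> : (a + b) / (2 * a) * a = (a + b) / 2 by field; rewrite gt_eqF.
lra.
Qed.

Section Floor.
Variable R : archiRealFieldType.

Definition frac_part (x : R) := x - (Num.floor x)%:~R.

Lemma floorB_le_nat (a b : R) (k : nat) : a - b <= k%:R ->
  (Num.floor a)%:~R - (Num.floor b)%:~R <= k%:R :> R.
Proof.
rewrite lerBlDl => /le_floor; rewrite floorDrz ?rpred_nat // !pmulrn intrKfloor.
by rewrite lerBlDl -intrD ler_int.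
Qed.

Lemma frac_part_shift_uniq (c : R) (N j j' : nat) : (j < N)%N -> (j' < N)%N ->
  frac_part (c + j%:R / N%:R) < N%:R^-1 ->
  frac_part (c + j'%:R / N%:R) < N%:R^-1 -> j = j'.
Proof.
wlog jj' : j j' / (j < j')%N => [W jN j'N fj fj'|].
  by case: (ltngtP j j') => [/W|/W|//]; [apply | move=> /(_ j'N jN fj' fj)].
move=> _ j'N; rewrite /frac_part.
have Ninv_ge0 : 0 <= N%:R^-1 :> R by rewrite invr_ge0.
have mulNinv (a b : nat) : (a < b)%N -> a%:R / N%:R + N%:R^-1 <= b%:R / N%:R :> R.
  by move=> ab; rewrite -[X in _ + X]mul1r -mulrDl ler_wpM2r // natr1 ler_nat.
have NNinv : N%:R / N%:R = 1 :> R.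
  by rewrite divff // pnatr_eq0 -lt0n (leq_ltn_trans _ j'N).
have step := mulNinv j j' jj'.
have := mulNinv j' N j'N; rewrite NNinv => top.
have j_ge0 : 0 <= j%:R / N%:R :> R by rewrite divr_ge0.
have := floor_le (c + j%:R / N%:R); have := floorD1_gt (c + j%:R / N%:R).
have := floor_le (c + j'%:R / N%:R); rewrite intrD.
set m := Num.floor (c + j%:R / N%:R); set m' := Num.floor (c + j'%:R / N%:R).
move=> m'_le m_gt m_le fj fj'.
have : m%:~R < m'%:~R :> R by lra.
have : m'%:~R < (m + 1)%:~R :> R by rewrite intrD; lra.
by rewrite !ltr_int; lia.
Qed.

End Floor.

Lemma fin_partitionT (U : Type) : fin_partition [:: @setT U].
Proof. by split=> [[|i] [|j] | x] //; exists 0%N. Qed.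

Lemma fin_partitionC (U : Type) (A : set U) : fin_partition [:: A; ~` A].
Proof.
split=> [[|[|i]] [|[|j]] //= _ _ | x]; first by rewrite setICr.
by case: (pselect (A x)) => Ax; [exists 0%N | exists 1%N].
Qed.

Section FinitelyAdditive.
Variables (R : realType) (U : Type) (mu : set U -> R).
Hypotheses (mu_ba : is_ba mu) (mu_ge0 : ba_positive mu).

Lemma ba_setU A B : A `&` B = set0 -> mu (A `|` B) = mu A + mu B.
Proof. by case: mu_ba => muU _; apply: muU. Qed.

Lemma ba_set0 : mu set0 = 0.
Proof. by have := @ba_setU set0 set0; rewrite setI0 setU0 => /(_ erefl); lra. Qed.

Lemma ba_setC A : mu (~` A) = mu setT - mu A.
Proof. by rewrite -(setUv A) ba_setU ?setICr //; lra. Qed.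

Lemma le_ba A B : A `<=` B -> mu A <= mu B.
Proof.
move=> AB; rewrite -(setDUK AB) ba_setU ?lerDl //.
by rewrite setDE setICA setICr setI0.
Qed.

Lemma ba_bigcup (F : nat -> set U) k :
  (forall i j, (i < j)%N -> (j < k)%N -> F i `&` F j = set0) ->
  \sum_(i < k) mu (F i) = mu [set x | exists2 i, (i < k)%N & F i x].
Proof.
elim: k => [|k IH] disjF.
  by rewrite big_ord0 -ba_set0; congr mu; apply/seteqP; split=> x // [].
rewrite big_ord_recr /= IH => [|i j ij jk]; last by apply: disjF => //; exact: ltnW.
rewrite -ba_setU.
  congr mu; apply/seteqP; split=> x /=.
    by case=> [[i ik Fix]|Fkx]; [exists i => //; exact: ltnW | exists k].
  case=> i; rewrite ltnS leq_eqVlt => /orP[/eqP->|ik] Fix; first by right.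
  by left; exists i.
apply/seteqP; split=> x //= [[i ik Fix] Fkx].
suff : (F i `&` F k) x by rewrite (disjF i k ik (ltnSn k)).
by split.
Qed.

Lemma ba_partition_setI (s : seq (set U)) E : fin_partition s ->
  \sum_(i < size s) mu (nth set0 s i `&` E) = mu E.
Proof.
case=> disj cover; rewrite (@ba_bigcup (fun i => nth set0 s i `&` E)).
  congr mu; apply/seteqP; split=> x /=; first by case=> i _ [].
  by move=> Ex; have [i ik six] := cover x; exists i.
move=> i j ij js; apply/seteqP; split=> x //= [[six _] [sjx _]].
suff : (nth set0 s i `&` nth set0 s j) x by rewrite (disj i j ij js).
by split.
Qed.

Lemma ba_partition (s : seq (set U)) : fin_partition s ->
  \sum_(i < size s) mu (nth set0 s i) = mu setT.
Proof.
by move=> /(ba_partition_setI setT) <-; apply: eq_bigr => i _; rewrite setIT.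
Qed.

Lemma ba_normE : ba_norm mu = mu setT.
Proof.
rewrite /ba_norm [X in sup X](_ : _ = [set mu setT]) ?sup1 //.
apply/seteqP; split=> r /=.
  case=> s [s_part ->]; rewrite -(ba_partition s_part).
  by apply: eq_bigr => i _; rewrite ger0_norm.
move=> ->; exists [:: setT]; split; first exact: fin_partitionT.
by rewrite big_ord1 /= ger0_norm.
Qed.

Lemma ba_pigeonhole (F : nat -> set U) N : (0 < N)%N ->
  (forall i j, (i < j)%N -> (j < N)%N -> F i `&` F j = set0) ->
  exists2 j, (j < N)%N & mu (F j) <= mu setT / N%:R.
Proof.
move=> N_gt0 disjF; apply: contrapT => none_small.
have : \sum_(i < N) (mu setT / N%:R) < \sum_(i < N) mu (F i).
  apply: ltr_sum => [|i _]; first by apply/hasP; exists (Ordinal N_gt0).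
  by rewrite ltNge; apply/negP => Fi_small; apply: none_small; exists i.
rewrite sumr_const card_ord -(mulr_natr (mu setT / N%:R)) divfK ?pnatr_eq0 -?lt0n //.
by rewrite ba_bigcup // ltNge (le_ba (subsetT _)).
Qed.

Section LowerIntegral.
Variable g : U -> R.
Hypothesis g_bounded : forall p, -1 <= g p <= 1.

Definition lower_sum (s : seq (set U)) :=
  \sum_(i < size s) inf (g @` nth set0 s i) * mu (nth set0 s i).

Definition lower_sums := [set r | exists s, fin_partition s /\ r = lower_sum s].

Lemma inf_image_le (A : set U) p : A p -> inf (g @` A) <= g p.
Proof.
move=> Ap; apply: ge_inf; last by exists p.
by exists (-1) => _ [q _ <-]; case/andP: (g_bounded q).
Qed.

Lemma inf_image_ge (A : set U) c : A !=set0 -> (forall p, A p -> c <= g p) ->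
  c <= inf (g @` A).
Proof.
move=> [p Ap] cA; apply: lb_le_inf; first by exists (g p), p.
by move=> _ [q Aq <-]; apply: cA.
Qed.

Lemma lower_sums_neq0 : lower_sums !=set0.
Proof. by exists (lower_sum [:: setT]), [:: setT]; split=> //; exact: fin_partitionT. Qed.

Lemma lower_sum_le (s : seq (set U)) eta : fin_partition s -> 0 <= eta ->
  lower_sum s <= mu setT - eta * mu [set p | g p < 1 - eta].
Proof.
move=> s_part eta_ge0; rewrite -(ba_partition s_part).
rewrite -(ba_partition_setI [set p | g p < 1 - eta] s_part) mulr_sumr -sumrB.
apply: ler_sum => i _; set P := nth set0 s i; set L := [set p | g p < 1 - eta].
have [-> | /set0P[p Pp]] := eqVneq P set0; first by rewrite set0I ba_set0 !mulr0 subr0.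
have muPL_le : mu (P `&` L) <= mu P by apply: le_ba => x [].
have [-> | /set0P[q [Pq Lq]]] := eqVneq (P `&` L) set0.
  rewrite ba_set0 mulr0 subr0 ler_piMl //.
  by apply: le_trans (inf_image_le Pp) _; case/andP: (g_bounded p).
have inf_le : inf (g @` P) <= 1 - eta by apply: le_trans (inf_image_le Pq) (ltW Lq).
have := ler_wpM2r (mu_ge0 P) inf_le; nra.
Qed.

Lemma ba_integral_le_markov eta : 0 <= eta ->
  ba_integral mu g <= mu setT - eta * mu [set p | g p < 1 - eta].
Proof.
move=> eta_ge0; apply: ge_sup; first exact: lower_sums_neq0.
by move=> _ [s [s_part ->]]; exact: lower_sum_le.
Qed.

Lemma ba_integral_ge_piecewise (A : set U) a b :
  (forall p, A p -> a <= g p) -> (forall p, ~ A p -> b <= g p) ->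
  a * mu A + b * mu (~` A) <= ba_integral mu g.
Proof.
move=> aA bAc; have has_sup_lower_sums : has_sup lower_sums.
  split; first exact: lower_sums_neq0.
  exists (mu setT) => _ [s [s_part ->]].
  by have := lower_sum_le s_part (lexx 0); rewrite mul0r subr0.
have inf_bound (B : set U) c : (forall p, B p -> c <= g p) ->
    c * mu B <= inf (g @` B) * mu B.
  move=> cB; have [-> | B_ne0] := eqVneq B set0; first by rewrite ba_set0 !mulr0.
  by apply: ler_wpM2r => //; apply: inf_image_ge => //; exact/set0P.
apply: le_trans (sup_upper_bound has_sup_lower_sums _); last first.
  by exists [:: A; ~` A]; split=> //; exact: fin_partitionC.
by rewrite /lower_sum big_ord_recl big_ord1 lerD // inf_bound.
Qed.

(* [ba_integral] is a lower integral, so this is not [ba_integral_le_markov] for [- g]. *)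
Lemma ba_integral_ge_markov eta : 0 <= eta ->
  - mu setT + eta * mu [set p | - g p < 1 - eta] <= ba_integral mu g.
Proof.
move=> eta_ge0; pose A := [set p | - g p < 1 - eta].
suff : (-1 + eta) * mu A + (-1) * mu (~` A) <= ba_integral mu g.
  by rewrite ba_setC; lra.
apply: ba_integral_ge_piecewise => [p | p _]; first by rewrite /A /=; lra.
by case/andP: (g_bounded p).
Qed.

Lemma ba_integral_abs_le : `|ba_integral mu g| <= mu setT.
Proof.
have := ba_integral_le_markov (lexx 0); have := ba_integral_ge_markov (lexx 0).
rewrite !mul0r ler_norml; lra.
Qed.

Lemma ba_integral_abs_markov eps eta : 0 <= eta ->
  (1 - eps) * mu setT < `|ba_integral mu g| ->
  eta * mu [set p | g p < 1 - eta] < eps * mu setT \/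
  eta * mu [set p | - g p < 1 - eta] < eps * mu setT.
Proof.
move=> eta_ge0; have := ba_integral_le_markov eta_ge0.
have := ba_integral_ge_markov eta_ge0.
case: (lerP 0 (ba_integral mu g)) => [/ger0_norm | /ltr0_norm] ->; [left | right]; lra.
Qed.

End LowerIntegral.

End FinitelyAdditive.

Section Metric.
Variables (R : realType) (T : Type) (d : T -> T -> R) (x0 : T).
Hypothesis d_metric : is_metric d.

Local Notation X q := (sval q).1.
Local Notation Y q := (sval q).2.

Lemma metric_sym x y : d x y = d y x.
Proof. by case: d_metric => _ [+ _]; apply. Qed.

Lemma metric_triangle x y z : d x z <= d x y + d y z.
Proof. by case: d_metric => _ [_ +]; apply. Qed.

Lemma metric_xx x : d x x = 0.
Proof. by apply/(proj1 d_metric). Qed.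

Lemma metric_ge0 x y : 0 <= d x y.
Proof. by have := metric_triangle x y x; rewrite metric_xx metric_sym; lra. Qed.

Lemma metric_gt0 (p : Mt T) : 0 < d (X p) (Y p).
Proof.
rewrite lt_def metric_ge0 andbT; apply/eqP => /(proj1 d_metric (X p) (Y p)).
exact: svalP p.
Qed.

Lemma Phi_eq1 f (p : Mt T) : Phi d f p = 1 <-> f (X p) - f (Y p) = d (X p) (Y p).
Proof.
have dp_neq0 := lt0r_neq0 (metric_gt0 p); rewrite /Phi.
split=> [Phi1 | ->]; last by rewrite divff.
by rewrite -[LHS](divfK dp_neq0) Phi1 mul1r.
Qed.

Lemma Phi_bounded f : in_Lip0_ball d x0 f -> forall p, -1 <= Phi d f p <= 1.
Proof.
move=> [_ f_lip] p; have := f_lip (X p) (Y p).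
by rewrite ler_norml /Phi ler_pdivlMr ?ler_pdivrMr ?metric_gt0 // mulN1r mul1r.
Qed.

Lemma Lip0_ball0 : in_Lip0_ball d x0 (fun=> 0).
Proof. by split=> // x y; rewrite subrr normr0 metric_ge0. Qed.

Lemma Lip0_ballN f : in_Lip0_ball d x0 f -> in_Lip0_ball d x0 (fun x => - f x).
Proof. by move=> [f0 f_lip]; split=> [|x y]; rewrite ?f0 ?oppr0 // -opprD normrN. Qed.

Lemma PhiN f p : Phi d (fun x => - f x) p = - Phi d f p.
Proof. by rewrite /Phi -mulNr opprD. Qed.

Lemma cyclically_monotonic_Phi_eq1 f (B : set (Mt T)) : in_Lip0_ball d x0 f ->
  (forall p, B p -> Phi d f p = 1) -> cyclically_monotonic d B.
Proof.
move=> [_ f_lip] BPhi1 k p Bp.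
have dE i : d (X (p i)) (Y (p i)) = f (X (p i)) - f (Y (p i)).
  by apply/esym/Phi_eq1/BPhi1.
rewrite (eq_bigr _ (fun i _ => dE i)) sumrB.
rewrite [S in _ - S <= _](reindex_inj (@ordS_inj k)) -sumrB.
by apply: ler_sum => i _; apply: le_trans (f_lip _ _); exact: ler_norm.
Qed.

Section Potential.
Variable B : set (Mt T).
Hypothesis B_cm : cyclically_monotonic d B.

Definition chain_cost z k (p : nat -> Mt T) :=
  if k is k'.+1 then
    d z (Y (p 0%N)) + \sum_(i < k') d (X (p i)) (Y (p i.+1))
    - \sum_(i < k) d (X (p i)) (Y (p i)) + d (X (p k')) x0
  else d z x0.

Definition chain_cons (q : Mt T) (p : nat -> Mt T) : nat -> Mt T :=
  fun i => if i is j.+1 then p j else q.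

(* The alternative [r = d z x0] is the empty chain, listed separately because
   [Mt T] may be empty. *)
Definition chain_costs z := [set r | r = d z x0 \/
  exists k p, (forall i, (i < k)%N -> B (p i)) /\ r = chain_cost z k p].

Definition potential z := inf (chain_costs z).

Lemma chain_cost_triangle u v k p : chain_cost u k p <= d u v + chain_cost v k p.
Proof.
case: k => [|k] /=; first exact: metric_triangle.
by have := metric_triangle u v (Y (p 0%N)); lra.
Qed.

Lemma chain_cost_cons q k p :
  chain_cost (Y q) k.+1 (chain_cons q p) = chain_cost (X q) k p - d (X q) (Y q).
Proof.
case: k => [|k] /=; first by rewrite big_ord0 big_ord1 /= metric_xx; lra.
by rewrite big_ord_recl [\sum_(i < k.+2) _]big_ord_recl /= metric_xx; lra.
Qed.

Lemma chain_cost_x0_ge0 k p : (forall i, (i < k)%N -> B (p i)) ->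
  0 <= chain_cost x0 k p.
Proof.
case: k => [|k] Bp /=; first by rewrite metric_xx.
have := B_cm (fun i : 'I_k.+1 => Bp i (ltn_ord i)).
have wrap : \sum_(i < k) d (X (p i)) (Y (p (i.+1 %% k.+1)%N)) =
            \sum_(i < k) d (X (p i)) (Y (p i.+1)).
  by apply: eq_bigr => i _; rewrite modn_small // ltnS.
rewrite big_ord_recr [S in _ <= S -> _]big_ord_recr /= modnn wrap.
(* The chain closes into a cycle through the base point: d(x_k,y_0) <= d(x_k,x0) + d(x0,y_0). *)
have := metric_triangle (X (p k)) x0 (Y (p 0%N)); rewrite (metric_sym x0); lra.
Qed.

Lemma chain_costs_lbound z : lbound (chain_costs z) (- d x0 z).
Proof.
move=> _ [->|[k [p [Bp ->]]]]; last first.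
  by have := chain_cost_x0_ge0 Bp; have := chain_cost_triangle x0 z k p; lra.
by have := metric_ge0 z x0; have := metric_ge0 x0 z; lra.
Qed.

Lemma potential_le z r : chain_costs z r -> potential z <= r.
Proof. by apply: ge_inf; exists (- d x0 z); exact: chain_costs_lbound. Qed.

Lemma potential_le_dist z : potential z <= d z x0.
Proof. by apply: potential_le; left. Qed.

Lemma potential_le_chain z k p : (forall i, (i < k)%N -> B (p i)) ->
  potential z <= chain_cost z k p.
Proof. by move=> Bp; apply: potential_le; right; exists k, p. Qed.

Lemma potential_ge z c : c <= d z x0 ->
  (forall k p, (forall i, (i < k)%N -> B (p i)) -> c <= chain_cost z k p) ->
  c <= potential z.
Proof.
move=> c_le c_lb; apply: lb_le_inf => [|_ [->|[k [p [Bp ->]]]]] //; last exact: c_lb.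
by exists (d z x0); left.
Qed.

Lemma potential_lipschitz u v : potential u <= d u v + potential v.
Proof.
rewrite -lerBlDl; apply: potential_ge => [|k p Bp].
  by have := potential_le_dist u; have := metric_triangle u v x0; lra.
have := potential_le_chain u Bp; have := chain_cost_triangle u v k p; lra.
Qed.

Lemma potential_Lip0_ball : in_Lip0_ball d x0 potential.
Proof.
split=> [|x y].
  apply/eqP; rewrite eq_le; have := potential_le_dist x0; rewrite metric_xx => ->.
  by apply: potential_ge => [|k p /chain_cost_x0_ge0 //]; rewrite metric_xx.
have := potential_lipschitz x y; have := potential_lipschitz y x.
by rewrite ler_norml (metric_sym y x); lra.
Qed.

Lemma potential_Phi_eq1 q : B q -> Phi d potential q = 1.
Proof.
move=> Bq; apply/Phi_eq1/eqP; rewrite eq_le; apply/andP; split.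
  by have := potential_lipschitz (X q) (Y q); lra.
have cons_le k p : (forall i, (i < k)%N -> B (p i)) ->
    potential (Y q) <= chain_cost (X q) k p - d (X q) (Y q).
  move=> Bp; rewrite -chain_cost_cons; apply: potential_le_chain.
  by case=> [|i] //= /Bp.
rewrite lerBrDr; apply: potential_ge => [|k p /cons_le]; last lra.
by have /= := cons_le 0%N (fun=> q) (fun i (_ : (i < 0)%N) => Bq); lra.
Qed.

End Potential.

End Metric.

Section Rounding.
Variables (R : realType) (n : nat) (T : Type) (d : T -> T -> R) (x0 : T).
Hypotheses (d_metric : is_metric d) (d_int : int_valued_le d n).

Local Notation X q := (sval q).1.
Local Notation Y q := (sval q).2.

Lemma dist_subr_le_Phi h p : in_Lip0_ball d x0 h ->
  d (X p) (Y p) - (h (X p) - h (Y p)) <= n%:R * (1 - Phi d h p).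
Proof.
move=> h_ball; have dp_gt0 := metric_gt0 d_metric p.
have /andP[_ Phi_le1] := Phi_bounded d_metric h_ball p.
have [k [kn dk]] := d_int (X p) (Y p).
have -> : h (X p) - h (Y p) = Phi d h p * d (X p) (Y p) by rewrite divfK ?gt_eqF.
by rewrite -[S in S - _]mul1r -mulrBl mulrC ler_wpM2r ?subr_ge0 // dk ler_nat.
Qed.

Definition round_shift (h : T -> R) t x : R :=
  (Num.floor (h x + t))%:~R - (Num.floor (h x0 + t))%:~R.

Lemma round_shiftB h t x y :
  round_shift h t x - round_shift h t y =
  (Num.floor (h x + t))%:~R - (Num.floor (h y + t))%:~R.
Proof. by rewrite /round_shift; lra. Qed.

Lemma round_shift_Lip0_ball h t : in_Lip0_ball d x0 h ->
  in_Lip0_ball d x0 (round_shift h t).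
Proof.
move=> [_ h_lip]; split=> [|x y]; first by rewrite /round_shift subrr.
have := h_lip x y; have [k [_ ->]] := d_int x y.
rewrite round_shiftB !ler_norml => /andP[hxy hyx].
by rewrite lerNl opprB !floorB_le_nat //; lra.
Qed.

Lemma round_shift_Phi_eq1 h t p : in_Lip0_ball d x0 h ->
  d (X p) (Y p) - (h (X p) - h (Y p)) <= frac_part (h (Y p) + t) ->
  Phi d (round_shift h t) p = 1.
Proof.
move=> [_ h_lip] defect_le; apply/(Phi_eq1 d_metric); rewrite round_shiftB.
move: defect_le (h_lip (X p) (Y p)); have [k [_ ->]] := d_int (X p) (Y p).
rewrite ler_norml /frac_part => defect_le /andP[_ hXY].
apply/eqP; rewrite eq_le floorB_le_nat /=; last lra.
have : Num.floor (h (Y p) + t) + k%:Z <= Num.floor (h (X p) + t).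
  by rewrite floor_ge_int intrD /=; lra.
by rewrite -(ler_int R) intrD /=; lra.
Qed.

End Rounding.

Section Norming.
Variables (R : realType) (n : nat) (T : Type) (d : T -> T -> R) (x0 : T).
Variable mu : set (Mt T) -> R.
Hypotheses (d_metric : is_metric d) (d_int : int_valued_le d n).
Hypotheses (mu_ba : is_ba mu) (mu_ge0 : ba_positive mu).

Local Notation X q := (sval q).1.
Local Notation Y q := (sval q).2.

Lemma round_Lip0_ball h N (G : set (Mt T)) : in_Lip0_ball d x0 h -> (0 < N)%N ->
  (forall p, G p -> d (X p) (Y p) - (h (X p) - h (Y p)) < N%:R^-1) ->
  exists g B, [/\ in_Lip0_ball d x0 g, mu G - mu setT / N%:R <= mu B &
                 forall p, B p -> Phi d g p = 1].
Proof.
move=> h_ball N_gt0 G_defect.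
pose g j := round_shift x0 h (j%:R / N%:R).
pose F j := [set p | G p /\ Phi d (g j) p <> 1].
have F_frac j p : F j p -> frac_part (h (Y p) + j%:R / N%:R) < N%:R^-1.
  move=> [Gp Phi_neq1]; rewrite ltNge; apply/negP => frac_ge; apply: Phi_neq1.
  apply: round_shift_Phi_eq1 => //; have := G_defect p Gp; lra.
have F_disj i j : (i < j)%N -> (j < N)%N -> F i `&` F j = set0.
  move=> ij jN; apply/seteqP; split=> p //= [Fip Fjp].
  have := frac_part_shift_uniq (ltn_trans ij jN) jN (F_frac i p Fip) (F_frac j p Fjp).
  by move=> eq_ij; rewrite eq_ij ltnn in ij.
have [j _ Fj_small] := ba_pigeonhole mu_ba mu_ge0 N_gt0 F_disj.
exists (g j), [set p | G p /\ Phi d (g j) p = 1]; split=> [||p []//].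
  exact: round_shift_Lip0_ball.
have G_split : G = [set p | G p /\ Phi d (g j) p = 1] `|` F j.
  apply/seteqP; split=> p /=; last by case=> -[].
  by case: (pselect (Phi d (g j) p = 1)); [left | right].
rewrite {1}G_split ba_setU //; first lra.
by apply/seteqP; split=> p //= [[_ Phi1] [_]].
Qed.

Lemma has_sup_Phi_star_norm :
  has_sup [set r | exists f, in_Lip0_ball d x0 f /\ r = `|ba_integral mu (Phi d f)|].
Proof.
split; first by exists `|ba_integral mu (Phi d (fun=> 0))|, (fun=> 0); split=> //;
  exact: Lip0_ball0.
exists (mu setT) => _ [f [f_ball ->]].
exact: ba_integral_abs_le (Phi_bounded d_metric f_ball).
Qed.

Lemma Phi_star_norm_ub f : in_Lip0_ball d x0 f ->
  `|ba_integral mu (Phi d f)| <= Phi_star_norm d x0 mu.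
Proof. by move=> f_ball; apply: (sup_upper_bound has_sup_Phi_star_norm); exists f. Qed.

Lemma Phi_star_norm_le : Phi_star_norm d x0 mu <= mu setT.
Proof.
apply: ge_sup; first by case: has_sup_Phi_star_norm.
by move=> _ [f [f_ball ->]]; exact: ba_integral_abs_le (Phi_bounded d_metric f_ball).
Qed.

Lemma near_norming_Lip0_ball f eta eps : in_Lip0_ball d x0 f -> 0 < eta ->
  (1 - eps) * mu setT < `|ba_integral mu (Phi d f)| ->
  exists h G, [/\ in_Lip0_ball d x0 h, forall p, G p -> 1 - eta <= Phi d h p &
                 eta * mu (~` G) < eps * mu setT].
Proof.
move=> f_ball eta_gt0; have f_bounded := Phi_bounded d_metric f_ball.
have of_small_level_set h : in_Lip0_ball d x0 h ->
    eta * mu [set p | Phi d h p < 1 - eta] < eps * mu setT ->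
    exists h G, [/\ in_Lip0_ball d x0 h, forall p, G p -> 1 - eta <= Phi d h p &
                   eta * mu (~` G) < eps * mu setT].
  move=> h_ball small; exists h, [set p | 1 - eta <= Phi d h p]; split=> //.
  have -> : ~` [set p | 1 - eta <= Phi d h p] = [set p | Phi d h p < 1 - eta].
    by apply/seteqP; split=> p /=; rewrite ltNge => /negP.
  exact: small.
case/(ba_integral_abs_markov mu_ba mu_ge0 f_bounded (ltW eta_gt0)) => small.
  exact: of_small_level_set f_ball small.
by apply: of_small_level_set (Lip0_ballN f_ball) _; under eq_set do rewrite PhiN.
Qed.

Lemma Phi_eq1_of_norming : Phi_star_norm d x0 mu = mu setT ->
  forall gamma, 0 < gamma < 1 -> exists B f,
    [/\ in_Lip0_ball d x0 f, gamma * mu setT <= mu B & forall p, B p -> Phi d f p = 1].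
Proof.
move=> norming gamma /andP[gamma_gt0 gamma_lt1].
have [muT_le0 | muT_gt0] := leP (mu setT) 0.
  exists set0, (fun=> 0); split=> //; first exact: Lip0_ball0.
  by rewrite ba_set0 //; have := mu_ge0 setT; nra.
pose delta := (1 - gamma) / 2; have delta_gt0 : 0 < delta by rewrite divr_gt0 ?subr_gt0.
pose N := (Num.truncn delta^-1).+1.
have N_gt0 : (0 < N)%N by [].
have Ninv_lt : N%:R^-1 < delta.
  by rewrite -[delta]invrK ltf_pV2 ?posrE ?ltr0n ?invr_gt0 // truncnS_gt.
pose eta := ((n.+1 * N)%:R : R)^-1.
have eta_gt0 : 0 < eta by rewrite invr_gt0 ltr0n muln_gt0.
have n_eta : n%:R * eta < N%:R^-1.
  rewrite /eta natrM invfM mulrA gtr_pMl ?invr_gt0 ?ltr0n //.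
  by rewrite ltr_pdivrMr ?ltr0n // mul1r ltr_nat.
have eps_gt0 : 0 < eta * delta * mu setT by apply: mulr_gt0 => //; exact: mulr_gt0.
have [_ [f [f_ball ->]] f_norming] := sup_adherent eps_gt0 has_sup_Phi_star_norm.
rewrite -/(Phi_star_norm d x0 mu) norming in f_norming.
have [|h [G [h_ball G_Phi G_small]]] :=
  near_norming_Lip0_ball (eps := eta * delta) f_ball eta_gt0; first lra.
have G_defect p : G p -> d (X p) (Y p) - (h (X p) - h (Y p)) < N%:R^-1.
  move=> Gp; apply: le_lt_trans (dist_subr_le_Phi d_metric d_int p h_ball) _.
  by apply: le_lt_trans n_eta; rewrite ler_wpM2l // lerBlDr addrC -lerBlDr G_Phi.
have [g [B [g_ball B_large B_Phi]]] := round_Lip0_ball h_ball N_gt0 G_defect.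
exists B, g; split=> //.
have : mu (~` G) < delta * mu setT by rewrite -(ltr_pM2l eta_gt0) mulrA.
have : mu setT / N%:R < delta * mu setT by rewrite mulrC ltr_pM2r.
have -> : gamma * mu setT = mu setT - 2 * (delta * mu setT) by rewrite /delta; field.
by rewrite ba_setC //; lra.
Qed.

Lemma Phi_star_norm_ge_cyclically_monotonic B : cyclically_monotonic d B ->
  2 * mu B - mu setT <= Phi_star_norm d x0 mu.
Proof.
move=> B_cm; have f_ball := potential_Lip0_ball x0 d_metric B_cm.
apply: le_trans (Phi_star_norm_ub f_ball); apply: le_trans (ler_norm _).
suff : 1 * mu B + (-1) * mu (~` B) <= ba_integral mu (Phi d (potential d x0 B)).
  by rewrite ba_setC //; lra.
apply: (ba_integral_ge_piecewise mu_ba mu_ge0 (Phi_bounded d_metric f_ball)) => p.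
  by move=> /(potential_Phi_eq1 x0 d_metric B_cm) ->.
by move=> _; case/andP: (Phi_bounded d_metric f_ball p).
Qed.

Lemma norming_of_cyclically_monotonic :
  (forall gamma, 0 < gamma < 1 ->
     exists2 B, cyclically_monotonic d B & gamma * mu setT <= mu B) ->
  Phi_star_norm d x0 mu = mu setT.
Proof.
move=> large_cm; apply/eqP; rewrite eq_le Phi_star_norm_le /=.
apply: ler_of_forall_mul_lt1 => // g /andP[g_gt0 g_lt1].
have [|B B_cm B_large] := large_cm ((1 + g) / 2); first by apply/andP; split; lra.
have := Phi_star_norm_ge_cyclically_monotonic B_cm; lra.
Qed.

End Norming.

Unset Implicit Arguments.

Theorem proposition2p8 (R : realType) (n : nat) (T : Type) (d : T -> T -> R)
  (x0 : T) (mu : set (Mt T) -> R) :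
  is_metric d -> int_valued_le d n ->
  is_ba mu -> ba_positive mu ->
  [/\ (Phi_star_norm d x0 mu = ba_norm mu ->
        forall gamma : R, 0 < gamma < 1 ->
          exists B : set (Mt T), exists f : T -> R,
            [/\ in_Lip0_ball d x0 f, gamma * mu setT <= mu B &
                forall p, B p -> Phi d f p = 1]),
      ((forall gamma : R, 0 < gamma < 1 ->
          exists B : set (Mt T), exists f : T -> R,
            [/\ in_Lip0_ball d x0 f, gamma * mu setT <= mu B &
                forall p, B p -> Phi d f p = 1]) ->
        forall gamma : R, 0 < gamma < 1 ->
          exists2 B : set (Mt T), cyclically_monotonic d B & gamma * mu setT <= mu B) &
      ((forall gamma : R, 0 < gamma < 1 ->
          exists2 B : set (Mt T), cyclically_monotonic d B & gamma * mu setT <= mu B) ->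
        Phi_star_norm d x0 mu = ba_norm mu)].
Proof.
move=> d_metric d_int mu_ba mu_ge0; rewrite (ba_normE mu_ba mu_ge0); split.
- exact: Phi_eq1_of_norming.
- move=> large_Phi_eq1 gamma /large_Phi_eq1[B [f [f_ball B_large B_Phi_eq1]]].
  by exists B => //; exact: cyclically_monotonic_Phi_eq1 f_ball B_Phi_eq1.
- exact: norming_of_cyclically_monotonic.
Qed.
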